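(* For any sequence of points $u\in U$ converging to a vertex $p_i$, after passing to a subsequence, either $|\nabla\varphi(u)|\to\infty$ or $\nabla\varphi(u)$ converges to a point of $\partial C_{p_i}$.
   Context: $n\ge3$; $p_1,\dots,p_n\in\mathbb{R}^2_{(u_1,u_2)}$ are distinct vertices, in counterclockwise order, of a convex polygon with interior $U$; indices mod $n$. $A\ge0$, $V(u)=A+\sum_i\frac{1}{2|u-p_i|}$. For $b_1,\dots,b_n\in\mathbb{R}$, $\varphi:\overline U\to\mathbb{R}$ is the unique continuous convex function, smooth in $U$, with $\det D^2\varphi=V$ in $U$, $\varphi(p_i)=b_i$, and $\varphi$ affine linear on each edge $[p_i,p_{i+1}]$. The subgradient set at a vertex is $C_{p_i}=\{y\in\mathbb{R}^2:\varphi(u)-\varphi(p_i)\ge\langle y,u-p_i\rangle\ \forall u\in\overline U\}$. *)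

From Stdlib Require Import Reals Lra List.
From Coquelicot Require Import Coquelicot.
Open Scope R_scope.

Definition pt := (R * R)%type.

(* cross product of (q - p) and (r - p): > 0 iff r is strictly left of p->q *)
Definition cross (p q r : pt) : R :=
  (fst q - fst p) * (snd r - snd p) - (snd q - snd p) * (fst r - fst p).

Definition dot (y v : pt) : R := fst y * fst v + snd y * snd v.

Definition dist2 (u v : pt) : R :=
  sqrt ((fst u - fst v) ^ 2 + (snd u - snd v) ^ 2).

Definition nxt (n i : nat) : nat := ((i + 1) mod n)%nat.

Definition ccw_convex_polygon (n : nat) (p : nat -> pt) : Prop :=
  (3 <= n)%nat /\
  (forall i j, (i < n)%nat -> (j < n)%nat -> i <> j -> p i <> p j) /\
  (forall i j, (i < n)%nat -> (j < n)%nat -> j <> i -> j <> nxt n i ->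
     0 < cross (p i) (p (nxt n i)) (p j)).

Definition polyU (n : nat) (p : nat -> pt) (u : pt) : Prop :=
  forall i, (i < n)%nat -> 0 < cross (p i) (p (nxt n i)) u.
Definition polyUbar (n : nat) (p : nat -> pt) (u : pt) : Prop :=
  forall i, (i < n)%nat -> 0 <= cross (p i) (p (nxt n i)) u.

Definition Vpot (A : R) (n : nat) (p : nat -> pt) (u : pt) : R :=
  A + sum_f_R0 (fun i => / (2 * dist2 u (p i))) (n - 1).

(* partial derivatives: false = d/du1, true = d/du2 *)
Definition partial (j : bool) (f : pt -> R) : pt -> R :=
  fun x => if j then Derive (fun t => f (fst x, t)) (snd x)
           else Derive (fun t => f (t, snd x)) (fst x).

Definition ex_partial (j : bool) (f : pt -> R) (x : pt) : Prop :=
  if j then ex_derive (fun t => f (fst x, t)) (snd x)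
  else ex_derive (fun t => f (t, snd x)) (fst x).

Fixpoint iter_partial (l : list bool) (f : pt -> R) : pt -> R :=
  match l with
  | nil => f
  | cons j l2 => partial j (iter_partial l2 f)
  end.

Definition smooth_on (U : pt -> Prop) (f : pt -> R) : Prop :=
  forall (l : list bool) (x : pt), U x ->
    continuous (iter_partial l f) x /\
    (forall j, ex_partial j (iter_partial l f) x).

Definition continuous_on_set (S : pt -> Prop) (f : pt -> R) : Prop :=
  forall x, S x -> forall eps : R, 0 < eps -> exists delta : R, 0 < delta /\
    forall y, S y -> dist2 y x < delta -> Rabs (f y - f x) < eps.

Definition convex_on_set (S : pt -> Prop) (f : pt -> R) : Prop :=
  forall x y t, S x -> S y -> 0 <= t <= 1 ->
    f ((1 - t) * fst x + t * fst y, (1 - t) * snd x + t * snd y)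
      <= (1 - t) * f x + t * f y.

Definition affine_on_segment (f : pt -> R) (a c : pt) : Prop :=
  forall t, 0 <= t <= 1 ->
    f ((1 - t) * fst a + t * fst c, (1 - t) * snd a + t * snd c)
      = (1 - t) * f a + t * f c.

Definition grad (f : pt -> R) (x : pt) : pt := (partial false f x, partial true f x).

Definition hess_det (f : pt -> R) (x : pt) : R :=
  partial false (partial false f) x * partial true (partial true f) x
  - partial true (partial false f) x * partial false (partial true f) x.

Definition is_MA_solution (n : nat) (p : nat -> pt) (A : R) (b : nat -> R)
    (phi : pt -> R) : Prop :=
  continuous_on_set (polyUbar n p) phi /\
  convex_on_set (polyUbar n p) phi /\
  smooth_on (polyU n p) phi /\
  (forall u, polyU n p u -> hess_det phi u = Vpot A n p u) /\
  (forall i, (i < n)%nat -> phi (p i) = b i) /\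
  (forall i, (i < n)%nat -> affine_on_segment phi (p i) (p (nxt n i))).

Definition subgrad (n : nat) (p : nat -> pt) (phi : pt -> R) (q : pt) (y : pt) : Prop :=
  forall u, polyUbar n p u ->
    phi u - phi q >= dot y (fst u - fst q, snd u - snd q).

Definition boundary (S : pt -> Prop) (y : pt) : Prop :=
  forall eps : R, 0 < eps ->
    (exists z, S z /\ dist2 z y < eps) /\ (exists z, ~ S z /\ dist2 z y < eps).

Definition norm2 (y : pt) : R := sqrt (fst y ^ 2 + snd y ^ 2).

Definition seq_cv (u : nat -> pt) (l : pt) : Prop :=
  is_lim_seq (fun k => fst (u k)) (fst l) /\ is_lim_seq (fun k => snd (u k)) (snd l).

From Stdlib Require Import Reals Lra Lia Classical ClassicalEpsilon.
From Coquelicot Require Import Coquelicot.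
Open Scope R_scope.

(* Convexity and differentiability give the tangent inequality
   phi v - phi w >= <grad phi w, v - w> for w in U.  Along a subsequence the
   gradients either blow up or stay bounded, and then converge to some y by
   Bolzano-Weierstrass.  Letting w = u k -> p_i in the tangent inequality puts y
   in C_{p_i}.  Adding the tangent inequality at w towards p_i to the subgradient
   inequality at p_i gives <z - grad phi w, w - p_i> <= 0 for every z in C_{p_i};
   as grad phi w is close to y, the point y + r (w - p_i)/|w - p_i| lies outside
   C_{p_i} for every r > 0, so y is a boundary point. *)

Definition extraction (s : nat -> nat) : Prop := forall k, (s k < s (S k))%nat.

Lemma extraction_lt (s : nat -> nat) : extraction s ->
  forall j k, (j < k)%nat -> (s j < s k)%nat.
Proof.
  intros Hs j k Hjk; induction Hjk as [|k _ IH]; [apply Hs|].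
  specialize (Hs k); lia.
Qed.

Lemma extraction_comp (s t : nat -> nat) :
  extraction s -> extraction t -> extraction (fun k => s (t k)).
Proof. intros Hs Ht k; apply (extraction_lt s Hs), Ht. Qed.

Lemma seq_cv_extraction (u : nat -> pt) (l : pt) (s : nat -> nat) :
  extraction s -> seq_cv u l -> seq_cv (fun k => u (s k)) l.
Proof.
  intros Hs [H1 H2].
  split; apply (is_lim_seq_subseq (fun k => _ (u k))); auto; apply eventually_subseq, Hs.
Qed.

Fixpoint chase (f : nat -> nat -> nat) (k : nat) : nat :=
  match k with
  | O => f O O
  | S k' => f k (S (chase f k'))
  end.

Lemma extraction_of_frequently (P : nat -> nat -> Prop) :
  (forall k N, exists m, (N <= m)%nat /\ P k m) ->
  exists s, extraction s /\ forall k, P k (s k).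
Proof.
  intros H.
  destruct (choice (fun kN m => (snd kN <= m)%nat /\ P (fst kN) m)
              (fun kN => H (fst kN) (snd kN))) as [f Hf].
  exists (chase (fun k N => f (k, N))); split.
  - intros k; cbn [chase]; destruct (Hf (S k, S (chase (fun k N => f (k, N)) k))) as [Hle _].
    cbn [fst snd] in Hle; lia.
  - intros [|k]; apply (Hf (_, _)).
Qed.

Lemma unbounded_or_bounded_extraction (a : nat -> R) :
  exists s, extraction s /\
    (is_lim_seq (fun k => a (s k)) p_infty \/ exists M, forall k, a (s k) <= M).
Proof.
  destruct (classic (forall k N, exists m, (N <= m)%nat /\ INR k < a m)) as [Hunb|Hbnd].
  - destruct (extraction_of_frequently _ Hunb) as [s [Hs Ha]].
    exists s; split; [exact Hs|left].
    apply (is_lim_seq_le_p_loc INR); [|exact is_lim_seq_INR].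
    exists O; intros k _; apply Rlt_le, Ha.
  - apply not_all_ex_not in Hbnd as [M HM]; apply not_all_ex_not in HM as [N HN].
    exists (fun k => (k + N)%nat); split; [intros k; lia|right].
    exists (INR M); intros k; apply Rnot_lt_le; intros Hlt.
    apply HN; exists (k + N)%nat; split; [lia|exact Hlt].
Qed.

Lemma bounded_cv_extraction (a : nat -> R) (M : R) :
  (forall k, Rabs (a k) <= M) ->
  exists s (l : R), extraction s /\ is_lim_seq (fun k => a (s k)) l.
Proof.
  intros HM.
  destruct (Bolzano_Weierstrass a (fun c => - M <= c <= M) (compact_P3 _ _)) as [l Hl].
  { intros k; apply Rabs_le_between, HM. }
  assert (Hnear : forall k N, exists m, (N <= m)%nat /\ Rabs (a m - l) < / INR (S k)).
  { intros k N.
    assert (Hk : 0 < / INR (S k)) by (apply Rinv_0_lt_compat, lt_0_INR; lia).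
    apply (Hl (disc l (mkposreal _ Hk)) N); exists (mkposreal _ Hk); intros z Hz; exact Hz. }
  destruct (extraction_of_frequently _ Hnear) as [s [Hs Has]].
  exists s, l; split; [exact Hs|].
  apply is_lim_seq_spec; intros eps.
  destruct (INR_unbounded (/ eps)) as [N HN]; exists N; intros k Hk.
  apply (Rlt_trans _ _ _ (Has k)).
  rewrite <- (Rinv_inv eps); apply Rinv_lt_contravar.
  - apply Rmult_lt_0_compat; [apply Rinv_0_lt_compat, cond_pos|apply lt_0_INR; lia].
  - apply le_INR in Hk; rewrite S_INR; lra.
Qed.

Definition vsub (x y : pt) : pt := (fst x - fst y, snd x - snd y).

Lemma Rabs_le_norm2_fst (y : pt) : Rabs (fst y) <= norm2 y.
Proof.
  rewrite <- sqrt_Rsqr_abs; apply sqrt_le_1_alt.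
  unfold Rsqr; pose proof (pow2_ge_0 (snd y)); lra.
Qed.

Lemma Rabs_le_norm2_snd (y : pt) : Rabs (snd y) <= norm2 y.
Proof.
  rewrite <- sqrt_Rsqr_abs; apply sqrt_le_1_alt.
  unfold Rsqr; pose proof (pow2_ge_0 (fst y)); lra.
Qed.

Lemma dot_le_norm2 (x y : pt) : dot x y <= norm2 x * norm2 y.
Proof.
  unfold dot, norm2; rewrite <- sqrt_mult_alt by nra.
  apply (Rle_trans _ (Rabs (fst x * fst y + snd x * snd y))); [apply Rle_abs|].
  rewrite <- sqrt_Rsqr_abs; apply sqrt_le_1_alt.
  unfold Rsqr; pose proof (pow2_ge_0 (fst x * snd y - snd x * fst y)); nra.
Qed.

Lemma norm2_scale (c : R) (e : pt) : norm2 (c * fst e, c * snd e) = Rabs c * norm2 e.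
Proof.
  unfold norm2; cbn [fst snd].
  rewrite <- sqrt_Rsqr_abs, <- sqrt_mult_alt by apply Rle_0_sqr.
  f_equal; unfold Rsqr; ring.
Qed.

Lemma norm2_sqr (e : pt) : norm2 e * norm2 e = fst e ^ 2 + snd e ^ 2.
Proof. apply sqrt_sqrt; nra. Qed.

Lemma seq_cv_dist2 (u : nat -> pt) (l : pt) :
  seq_cv u l -> is_lim_seq (fun k => dist2 (u k) l) 0.
Proof.
  intros [H1 H2]; rewrite <- sqrt_0.
  apply is_lim_seq_continuous; [apply continuity_pt_sqrt; lra|].
  replace 0 with ((fst l - fst l) ^ 2 + (snd l - snd l) ^ 2) by ring.
  assert (Hsq : forall (x : nat -> R) (c : R), is_lim_seq x c -> is_lim_seq (fun k => x k ^ 2) (c ^ 2))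
    by (intros x c Hx; apply is_lim_seq_mult'; [|apply is_lim_seq_mult'];
        auto using is_lim_seq_const).
  apply (is_lim_seq_plus' (fun k => (fst (u k) - fst l) ^ 2)); apply Hsq;
    apply (is_lim_seq_minus' (fun k => _ (u k))); auto using is_lim_seq_const.
Qed.

Lemma seq_cv_dot (a b : nat -> pt) (x y : pt) :
  seq_cv a x -> seq_cv b y -> is_lim_seq (fun k => dot (a k) (b k)) (dot x y).
Proof.
  intros [Ha1 Ha2] [Hb1 Hb2]; unfold dot.
  apply (is_lim_seq_plus' (fun k => fst (a k) * fst (b k))); apply is_lim_seq_mult'; assumption.
Qed.

Lemma bounded_pt_cv_extraction (a : nat -> pt) (M : R) :
  (forall k, norm2 (a k) <= M) ->
  exists s y, extraction s /\ seq_cv (fun k => a (s k)) y.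
Proof.
  intros HM.
  destruct (bounded_cv_extraction (fun k => fst (a k)) M) as [s [y1 [Hs Hy1]]].
  { intros k; eapply Rle_trans; [apply Rabs_le_norm2_fst|apply HM]. }
  destruct (bounded_cv_extraction (fun k => snd (a (s k))) M) as [t [y2 [Ht Hy2]]].
  { intros k; eapply Rle_trans; [apply Rabs_le_norm2_snd|apply HM]. }
  exists (fun k => s (t k)), (y1, y2); split; [apply extraction_comp; assumption|split].
  - apply (is_lim_seq_subseq (fun k => fst (a (s k)))); [apply eventually_subseq, Ht|exact Hy1].
  - exact Hy2.
Qed.

Lemma Rabs_sub_le_between (a b c : R) :
  Rmin a b <= c <= Rmax a b -> Rabs (c - a) <= Rabs (b - a).
Proof.
  unfold Rmin, Rmax; destruct (Rle_dec a b); intros Hc.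
  - rewrite !Rabs_pos_eq; lra.
  - rewrite !Rabs_left1; lra.
Qed.

Lemma derivable_pt_lim_remainder (g : R -> R) (y l eps : R) :
  derivable_pt_lim g y l -> 0 < eps ->
  exists delta, 0 < delta /\ forall v, Rabs (v - y) < delta ->
    Rabs (g v - g y - l * (v - y)) <= eps * Rabs (v - y).
Proof.
  intros Hg Heps; destruct (Hg eps Heps) as [d Hd].
  exists d; split; [apply cond_pos|intros v Hv].
  destruct (Req_dec v y) as [->|Hne].
  { rewrite !Rminus_diag, Rmult_0_r, Rminus_0_r, Rabs_R0; lra. }
  assert (Hh : v - y <> 0) by lra.
  specialize (Hd (v - y) Hh Hv); replace (y + (v - y)) with v in Hd by ring.
  replace (g v - g y - l * (v - y)) with (((g v - g y) / (v - y) - l) * (v - y))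
    by (field; exact Hh).
  rewrite Rabs_mult; apply Rmult_le_compat_r; [apply Rabs_pos|lra].
Qed.

Lemma differentiable_pt_lim_of_partials (f : R -> R -> R) (x y : R) :
  locally_2d (fun u v => ex_derive (fun z => f z v) u) x y ->
  continuity_2d_pt (fun u v => Derive (fun z => f z v) u) x y ->
  ex_derive (fun z => f x z) y ->
  differentiable_pt_lim f x y (Derive (fun z => f z y) x) (Derive (fun z => f x z) y).
Proof.
  intros [d1 Hex] Hcont Hy eps.
  set (D1 := Derive (fun z => f z y) x); set (D2 := Derive (fun z => f x z) y).
  assert (Heps2 : 0 < eps / 2) by (pose proof (cond_pos eps); lra).
  destruct (Hcont (mkposreal _ Heps2)) as [d2 Hnear]; cbn [pos] in Hnear.
  destruct (derivable_pt_lim_remainder (fun z => f x z) y D2 (eps / 2)) as [d3 [Hd3 Hrem]];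
    [apply is_derive_Reals, Derive_correct, Hy|exact Heps2|].
  assert (Hd : 0 < Rmin d1 (Rmin d2 d3))
    by (repeat apply Rmin_glb_lt; auto; apply cond_pos).
  exists (mkposreal _ Hd); intros u v Hu Hv; cbn [pos] in Hu, Hv.
  pose proof (Rmin_l d1 (Rmin d2 d3)); pose proof (Rmin_r d1 (Rmin d2 d3)).
  pose proof (Rmin_l d2 d3); pose proof (Rmin_r d2 d3).
  assert (Hbetween : forall z, Rmin x u <= z <= Rmax x u -> Rabs (z - x) < Rmin d1 (Rmin d2 d3))
    by (intros z Hz; eapply Rle_lt_trans; [apply Rabs_sub_le_between, Hz|exact Hu]).
  destruct (MVT_gen (fun z => f z v) x u (fun z => Derive (fun t => f t v) z)) as [c [Hc Hmvt]].
  { intros z Hz; apply Derive_correct, Hex; [|lra].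
    specialize (Hbetween z (conj (Rlt_le _ _ (proj1 Hz)) (Rlt_le _ _ (proj2 Hz)))); lra. }
  { intros z Hz; apply continuity_pt_filterlim, (ex_derive_continuous (fun t => f t v)), Hex; [|lra].
    specialize (Hbetween z Hz); lra. }
  specialize (Hbetween c Hc).
  (* Horizontal increment by the mean value theorem and continuity of the first
     partial; vertical increment by the derivative of f x at y. *)
  assert (Hslope : Rabs (Derive (fun t => f t v) c - D1) < eps / 2)
    by (apply Hnear; lra).
  specialize (Hrem v ltac:(lra)).
  replace (f u v - f x y - (D1 * (u - x) + D2 * (v - y)))
    with ((Derive (fun t => f t v) c - D1) * (u - x) + (f x v - f x y - D2 * (v - y)))
    by (cbn beta in Hmvt; lra).
  eapply Rle_trans; [apply Rabs_triang|]; rewrite Rabs_mult.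
  assert (Rabs (u - x) <= Rmax (Rabs (u - x)) (Rabs (v - y))) by apply Rmax_l.
  assert (Rabs (v - y) <= Rmax (Rabs (u - x)) (Rabs (v - y))) by apply Rmax_r.
  pose proof (Rabs_pos (u - x)); pose proof (Rabs_pos (v - y)).
  assert (Rabs (Derive (fun t => f t v) c - D1) * Rabs (u - x) <= eps / 2 * Rabs (u - x))
    by (apply Rmult_le_compat_r; lra).
  nra.
Qed.

Lemma derivative_le_chord (h : R -> R) (l : R) :
  (forall t, 0 < t <= 1 -> h t <= (1 - t) * h 0 + t * h 1) ->
  derivable_pt_lim h 0 l -> l <= h 1 - h 0.
Proof.
  intros Hchord Hd; apply Rnot_lt_le; intros Hlt.
  destruct (Hd (l - (h 1 - h 0)) ltac:(lra)) as [d Hd'].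
  pose proof (cond_pos d) as Hd0.
  set (t := Rmin (d / 2) 1).
  assert (Ht : 0 < t <= 1) by (split; [apply Rmin_glb_lt; lra|apply Rmin_r]).
  assert (Htd : Rabs t < d).
  { rewrite Rabs_pos_eq by lra; pose proof (Rmin_l (d / 2) 1) as Hm; fold t in Hm; lra. }
  specialize (Hd' t ltac:(lra) Htd); rewrite Rplus_0_l in Hd'.
  assert (Hslope : (h t - h 0) / t <= h 1 - h 0).
  { apply Rle_div_l; [lra|]. specialize (Hchord t Ht); lra. }
  pose proof (Rle_abs (- ((h t - h 0) / t - l))); rewrite Rabs_Ropp in *; lra.
Qed.

Lemma convex_tangent_le (S : pt -> Prop) (f : pt -> R) (u v : pt) :
  convex_on_set S f -> S u -> S v ->
  differentiable_pt_lim (fun a b => f (a, b)) (fst u) (snd u) (fst (grad f u)) (snd (grad f u)) ->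
  dot (grad f u) (vsub v u) <= f v - f u.
Proof.
  intros Hconv Hu Hv Hdiff.
  set (h := fun t => f ((1 - t) * fst u + t * fst v, (1 - t) * snd u + t * snd v)).
  assert (Hh0 : h 0 = f u)
    by (unfold h; destruct u; f_equal; cbn [fst snd]; f_equal; ring).
  assert (Hh1 : h 1 = f v)
    by (unfold h; destruct v; f_equal; cbn [fst snd]; f_equal; ring).
  assert (Hline : forall a b : R, derivable_pt_lim (fun t => (1 - t) * a + t * b) 0 (b - a))
    by (intros a b; apply is_derive_Reals; auto_derive; [exact I|ring]).
  rewrite <- Hh0, <- Hh1; apply derivative_le_chord.
  - intros t Ht; rewrite Hh0, Hh1; apply Hconv; auto; lra.
  - apply (derivable_pt_lim_comp_2d (fun a b => f (a, b))); [|apply Hline|apply Hline].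
    replace ((1 - 0) * fst u + 0 * fst v) with (fst u) by ring.
    replace ((1 - 0) * snd u + 0 * snd v) with (snd u) by ring.
    exact Hdiff.
Qed.

Lemma smooth_on_differentiable (U : pt -> Prop) (f : pt -> R) (z : pt) :
  open U -> smooth_on U f -> U z ->
  differentiable_pt_lim (fun a b => f (a, b)) (fst z) (snd z) (fst (grad f z)) (snd (grad f z)).
Proof.
  intros HU Hf Hz; destruct z as [x y].
  apply differentiable_pt_lim_of_partials.
  - apply locally_2d_locally; apply (filter_imp U); [|exact (HU _ Hz)].
    intros [a b] Hab; exact (proj2 (Hf nil _ Hab) false).
  - apply continuity_2d_pt_filterlim; exact (proj1 (Hf (cons false nil) _ Hz)).
  - exact (proj2 (Hf nil _ Hz) true).
Qed.

Lemma dist2_pos (x y : pt) : x <> y -> 0 < dist2 x y.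
Proof.
  intros Hxy; apply sqrt_lt_R0.
  destruct (Rle_lt_dec ((fst x - fst y) ^ 2 + (snd x - snd y) ^ 2) 0) as [H0|H0]; [|exact H0].
  exfalso; apply Hxy; destruct x as [x1 x2], y as [y1 y2]; cbn [fst snd] in H0.
  pose proof (pow2_ge_0 (x1 - y1)); pose proof (pow2_ge_0 (x2 - y2)).
  f_equal; apply Rminus_diag_uniq, Rsqr_0_uniq; unfold Rsqr; lra.
Qed.

Lemma continuous_on_set_seq (S : pt -> Prop) (f : pt -> R) (w : nat -> pt) (l : pt) :
  continuous_on_set S f -> S l -> (forall k, S (w k)) -> seq_cv w l ->
  is_lim_seq (fun k => f (w k)) (f l).
Proof.
  intros Hf Hl Hw Hwl; apply is_lim_seq_spec; intros eps.
  destruct (Hf l Hl eps (cond_pos eps)) as [d [Hd Hnear]].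
  apply seq_cv_dist2, is_lim_seq_spec in Hwl; destruct (Hwl (mkposreal d Hd)) as [N HN].
  exists N; intros k Hk; apply Hnear; [apply Hw|].
  specialize (HN k Hk); cbn [pos] in HN.
  rewrite Rminus_0_r, Rabs_pos_eq in HN by apply sqrt_pos; exact HN.
Qed.

Lemma boundary_of_almost_supporting (C : pt -> Prop) (y : pt) :
  C y ->
  (forall r, 0 < r -> exists e, 0 < norm2 e /\ forall z, C z -> dot (vsub z y) e < r * norm2 e) ->
  boundary C y.
Proof.
  intros Hy Hsupp eps Heps; split.
  { exists y; split; [exact Hy|].
    unfold dist2; rewrite !Rminus_diag, pow_i, Rplus_0_r, sqrt_0 by lia; exact Heps. }
  destruct (Hsupp (eps / 2) ltac:(lra)) as [e [He Hlt]].
  set (c := eps / 2 / norm2 e).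
  assert (Hc : 0 < c) by (apply Rdiv_lt_0_compat; lra).
  exists (fst y + c * fst e, snd y + c * snd e); split.
  - intros Hz; specialize (Hlt _ Hz).
    replace (dot _ e) with (c * (norm2 e * norm2 e)) in Hlt
      by (rewrite norm2_sqr; unfold dot, vsub; cbn [fst snd]; ring).
    unfold c in Hlt; field_simplify in Hlt; lra.
  - change (dist2 _ y) with (norm2 (vsub (fst y + c * fst e, snd y + c * snd e) y)).
    replace (vsub _ y) with (c * fst e, c * snd e)
      by (unfold vsub; cbn [fst snd]; f_equal; ring).
    rewrite norm2_scale, Rabs_pos_eq by lra.
    unfold c; field_simplify; lra.
Qed.

Lemma cross_continuous (a c z : pt) : continuous (cross a c) z.
Proof.
  destruct z as [x y]; unfold cross.
  apply (continuous_minus (V := R_NormedModule) (fun z : pt => (fst c - fst a) * (snd z - snd a))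
    (fun z : pt => (snd c - snd a) * (fst z - fst a)));
  apply (continuous_mult (K := R_AbsRing) (fun _ => _)); try apply continuous_const;
  apply (continuous_minus (V := R_NormedModule) (fun z : pt => _ z) (fun _ => _));
  try apply continuous_const; [apply continuous_snd|apply continuous_fst].
Qed.

Lemma polyU_open (n : nat) (p : nat -> pt) : open (polyU n p).
Proof.
  assert (Hm : forall m, open (fun z => forall i, (i < m)%nat -> 0 < cross (p i) (p (nxt n i)) z)).
  { induction m as [|m IH].
    - apply (open_ext (fun _ => True)); [intros z; split; [intros _ i Hi; lia|tauto]|].
      apply open_true.
    - apply (open_ext (fun z => (forall i, (i < m)%nat -> 0 < cross (p i) (p (nxt n i)) z)
                                /\ 0 < cross (p m) (p (nxt n m)) z)).
      + intros z; split.
        * intros [Hlt Hm] i Hi; destruct (Nat.eq_dec i m) as [->|Hne]; [exact Hm|apply Hlt; lia].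
        * intros H; split; [intros i Hi; apply H; lia|apply H; lia].
      + apply open_and; [exact IH|].
        apply (open_comp _ (fun r => 0 < r)); [intros z _; apply cross_continuous|apply open_gt].
  }
  exact (Hm n).
Qed.

Lemma polyU_polyUbar (n : nat) (p : nat -> pt) (u : pt) : polyU n p u -> polyUbar n p u.
Proof. intros Hu i Hi; left; apply Hu, Hi. Qed.

Lemma vertex_polyUbar (n : nat) (p : nat -> pt) (i : nat) :
  ccw_convex_polygon n p -> (i < n)%nat -> polyUbar n p (p i).
Proof.
  intros [Hn [_ Hleft]] Hi j Hj.
  assert (Hnxt : (nxt n j < n)%nat) by (apply Nat.mod_upper_bound; lia).
  destruct (Nat.eq_dec i j) as [->|Hij]; [right; unfold cross; ring|].
  destruct (Nat.eq_dec i (nxt n j)) as [->|Hinxt]; [right; unfold cross; ring|].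
  left; apply Hleft; auto.
Qed.

Lemma vertex_not_polyU (n : nat) (p : nat -> pt) (i : nat) : (i < n)%nat -> ~ polyU n p (p i).
Proof. intros Hi Hu; specialize (Hu i Hi); unfold cross in Hu; lra. Qed.

Section GradientLimits.

Variables (n : nat) (p : nat -> pt) (phi : pt -> R).
Hypothesis phi_continuous : continuous_on_set (polyUbar n p) phi.
Hypothesis phi_convex : convex_on_set (polyUbar n p) phi.
Hypothesis phi_smooth : smooth_on (polyU n p) phi.

Lemma grad_tangent_le (u v : pt) :
  polyU n p u -> polyUbar n p v -> dot (grad phi u) (vsub v u) <= phi v - phi u.
Proof.
  intros Hu Hv; apply (convex_tangent_le _ _ _ _ phi_convex (polyU_polyUbar _ _ _ Hu) Hv).
  exact (smooth_on_differentiable _ _ _ (polyU_open n p) phi_smooth Hu).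
Qed.

Lemma grad_subgrad_monotone (w q z : pt) :
  polyU n p w -> polyUbar n p q -> subgrad n p phi q z ->
  0 <= dot (vsub (grad phi w) z) (vsub w q).
Proof.
  intros Hw Hq Hz.
  pose proof (grad_tangent_le w q Hw Hq) as Htan; specialize (Hz w (polyU_polyUbar _ _ _ Hw)).
  replace (dot _ _) with (- dot (grad phi w) (vsub q w) - dot z (vsub w q))
    by (unfold dot, vsub; cbn [fst snd]; ring).
  change (fst w - fst q, snd w - snd q) with (vsub w q) in Hz; lra.
Qed.

Lemma grad_limit_subgrad (q : pt) (w : nat -> pt) (y : pt) :
  polyUbar n p q -> (forall k, polyU n p (w k)) -> seq_cv w q ->
  seq_cv (fun k => grad phi (w k)) y -> subgrad n p phi q y.
Proof.
  intros Hq Hw Hwq Hg v Hv.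
  assert (Hphi : is_lim_seq (fun k => phi (w k)) (phi q))
    by (apply (continuous_on_set_seq _ _ _ _ phi_continuous Hq); auto using polyU_polyUbar).
  assert (Hgap : is_lim_seq (fun k => phi v - phi (w k) - dot (grad phi (w k)) (vsub v (w k)))
                            (phi v - phi q - dot y (vsub v q))).
  { apply is_lim_seq_minus'; [apply (is_lim_seq_minus' (fun _ => _)); auto using is_lim_seq_const|].
    apply seq_cv_dot; [exact Hg|].
    destruct Hwq; split; apply (is_lim_seq_minus' (fun _ => _)); auto using is_lim_seq_const. }
  assert (Hle := is_lim_seq_le (fun _ => 0) _ 0 _
                   (fun k => proj1 (Rminus_le_0 _ _) (grad_tangent_le _ v (Hw k) Hv))
                   (is_lim_seq_const 0) Hgap).
  simpl in Hle; unfold vsub in Hle; lra.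
Qed.

Lemma grad_limit_boundary_subgrad (q : pt) (w : nat -> pt) (y : pt) :
  polyUbar n p q -> ~ polyU n p q -> (forall k, polyU n p (w k)) -> seq_cv w q ->
  seq_cv (fun k => grad phi (w k)) y -> boundary (subgrad n p phi q) y.
Proof.
  intros Hq HqU Hw Hwq Hg.
  apply boundary_of_almost_supporting; [exact (grad_limit_subgrad q w y Hq Hw Hwq Hg)|].
  intros r Hr.
  apply seq_cv_dist2, is_lim_seq_spec in Hg; destruct (Hg (mkposreal r Hr)) as [N HN].
  specialize (HN N (Nat.le_refl N)); cbn [pos] in HN.
  rewrite Rminus_0_r, Rabs_pos_eq in HN by apply sqrt_pos.
  assert (He : 0 < norm2 (vsub (w N) q))
    by (apply dist2_pos; intros E; apply HqU; rewrite <- E; apply Hw).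
  exists (vsub (w N) q); split; [exact He|intros z Hz].
  pose proof (grad_subgrad_monotone (w N) q z (Hw N) Hq Hz) as Hmono.
  pose proof (dot_le_norm2 (vsub (grad phi (w N)) y) (vsub (w N) q)) as Hcs.
  change (norm2 (vsub (grad phi (w N)) y)) with (dist2 (grad phi (w N)) y) in Hcs.
  replace (dot (vsub z y) _) with
    (dot (vsub (grad phi (w N)) y) (vsub (w N) q) - dot (vsub (grad phi (w N)) z) (vsub (w N) q))
    by (unfold dot, vsub; cbn [fst snd]; ring).
  nra.
Qed.

End GradientLimits.

Theorem mainTheorem8 (n : nat) (p : nat -> pt) (A : R) (b : nat -> R)
    (phi : pt -> R) (i : nat) (u : nat -> pt) :
  ccw_convex_polygon n p -> 0 <= A ->
  is_MA_solution n p A b phi ->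
  (i < n)%nat ->
  (forall k, polyU n p (u k)) ->
  seq_cv u (p i) ->
  exists s : nat -> nat, (forall k, (s k < s (S k))%nat) /\
    (is_lim_seq (fun k => norm2 (grad phi (u (s k)))) p_infty \/
     exists y, boundary (subgrad n p phi (p i)) y /\
               seq_cv (fun k => grad phi (u (s k))) y).
Proof.
  intros Hpoly _ [Hcont [Hconv [Hsmooth _]]] Hi Hu Hcv.
  destruct (unbounded_or_bounded_extraction (fun k => norm2 (grad phi (u k))))
    as [s [Hs [Hinfty|[M HM]]]].
  - exists s; split; [exact Hs|left; exact Hinfty].
  - destruct (bounded_pt_cv_extraction (fun k => grad phi (u (s k))) M HM) as [t [y [Ht Hy]]].
    exists (fun k => s (t k)); split; [exact (extraction_comp s t Hs Ht)|right].
    exists y; split; [|exact Hy].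
    apply (grad_limit_boundary_subgrad n p phi Hcont Hconv Hsmooth (p i) (fun k => u (s (t k))));
      auto using vertex_polyUbar, vertex_not_polyU.
    apply seq_cv_extraction; [exact (extraction_comp s t Hs Ht)|exact Hcv].
Qed.
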